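(* Let $G$ be a connected graph with vertices $v_1,\dots,v_n$, and let $k_1,k_2,k_3$ be nonnegative integers with $k_2\neq k_3$. Then \[ \sum_{i=1}^{n} dav(G-v_i,k_1,k_2,k_3)=(n-2-k_1-k_2-k_3)\,dav(G,k_1,k_2,k_3)+(k_1+1)\,dav(G,k_1+1,k_2,k_3)+(k_2+1)\,dav(G,k_1,k_2+1,k_3)+(k_3+1)\,dav(G,k_1,k_2,k_3+1). \]
   Context: All graphs are finite, simple and undirected. $G-v$ denotes the graph obtained from $G$ by deleting vertex $v$ and its incident edges. For a graph $F$ and nonnegative integers $k_1,k_2,k_3$, $dav(F,k_1,k_2,k_3)$ denotes the number of pairs of adjacent vertices $x$ and $y$ in $F$ such that exactly $k_1$ vertices are adjacent to both $x$ and $y$, exactly $k_2$ vertices other than $y$ are adjacent to $x$ but not to $y$, and exactly $k_3$ vertices other than $x$ are adjacent to $y$ but not to $x$. *)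

From mathcomp Require Import all_boot all_order all_algebra.
Set Implicit Arguments. Unset Strict Implicit. Unset Printing Implicit Defensive.

(* The graph induced on a
   vertex subset S is represented by the pair (e, S); the whole graph G is
   S = [set: T] and G - v is S = [set: T] :\ v. *)

Definition dav_on (T : finType) (e : rel T) (S : {set T}) (k1 k2 k3 : nat) : nat :=
  #|[set p : T * T |
      [&& p.1 \in S, p.2 \in S, e p.1 p.2,
          #|[set z in S | e p.1 z && e p.2 z]| == k1,
          #|[set z in S | [&& e p.1 z, ~~ e p.2 z & z != p.2]]| == k2 &
          #|[set z in S | [&& e p.2 z, ~~ e p.1 z & z != p.1]]| == k3]]|.

Definition dav (T : finType) (e : rel T) (k1 k2 k3 : nat) : nat :=
  dav_on e [set: T] k1 k2 k3.

Definition dav_del (T : finType) (e : rel T) (v : T) (k1 k2 k3 : nat) : nat :=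
  dav_on e ([set: T] :\ v) k1 k2 k3.

Definition connected_graph (T : finType) (e : rel T) : Prop :=
  forall x y : T, connect e x y.

From mathcomp Require Import all_boot all_order all_algebra.
From mathcomp Require Import zify.
Import GRing.Theory Num.Theory.

(* Double counting over ordered adjacent pairs (x, y) with common neighbours N
   and private neighbours X of x and Y of y.  Deleting x or y destroys the
   pair; deleting any other v keeps it and, N, X, Y being pairwise disjoint,
   lowers by one the count of the one set containing v, if any.  So a pair with counts (a, b, c) is seen
   n - 2 - a - b - c times with counts (a, b, c), and a, b, c times with counts
   (a - 1, b, c), (a, b - 1, c), (a, b, c - 1); since a * [a - 1 = k1] equals
   (k1 + 1) * [a = k1 + 1], this yields the coefficients k_i + 1. *)

Set Implicit Arguments.
Unset Strict Implicit.
Unset Printing Implicit Defensive.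

Section DeletedCards.
Variable T : finType.
Implicit Types (A B C R : {set T}) (v : T).

Lemma card_setD1 A v : #|A :\ v| = #|A| - (v \in A).
Proof. by rewrite (cardsD1 v A) addKn. Qed.

Lemma setIdD1 A v (P : pred T) :
  [set z in A :\ v | P z] = [set z in A | P z] :\ v.
Proof. by apply/setP => z; rewrite !inE andbA. Qed.

Lemma sum_cardsD1 R A B C (F : nat -> nat -> nat -> nat) :
  [disjoint A & B] -> [disjoint A & C] -> [disjoint B & C] ->
  A :|: B :|: C \subset R ->
  \sum_(v in R) F #|A :\ v| #|B :\ v| #|C :\ v| =
    #|R :\: (A :|: B :|: C)| * F #|A| #|B| #|C| + #|A| * F #|A|.-1 #|B| #|C|
    + #|B| * F #|A| #|B|.-1 #|C| + #|C| * F #|A| #|B| #|C|.-1.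
Proof.
move=> dAB dAC dBC; rewrite !subUset => /andP[/andP[sAR sBR] sCR].
pose f v := F #|A :\ v| #|B :\ v| #|C :\ v|.
have sum_const (D : {set T}) m :
    {in D, forall v, f v = m} -> \sum_(v in D) f v = #|D| * m.
  by move=> fD; rewrite (eq_bigr (fun=> m)) ?sum_nat_const // => v /fD.
have restA : R :&: A = A by apply/setIidPr.
have restB : (R :\: A) :&: B = B.
  by rewrite setIDAC (setIidPr sBR); apply/setDidPl; rewrite disjoint_sym.
have restC : (R :\: A :\: B) :&: C = C.
  rewrite !setIDAC (setIidPr sCR).
  have /setDidPl -> : [disjoint C & A] by rewrite disjoint_sym.
  by apply/setDidPl; rewrite disjoint_sym.
have sum_setID (D E : {set T}) :
    \sum_(v in D) f v = \sum_(v in D :&: E) f v + \sum_(v in D :\: E) f v.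
  exact: big_setID.
rewrite (sum_setID R A) (sum_setID (R :\: A) B) (sum_setID (R :\: A :\: B) C).
rewrite restA restB restC !setDDl setUA.
have fA : {in A, forall v, f v = F #|A|.-1 #|B| #|C|}.
  move=> v vA; rewrite /f !card_setD1 vA (disjointFr dAB vA) (disjointFr dAC vA).
  by rewrite subn1 !subn0.
have fB : {in B, forall v, f v = F #|A| #|B|.-1 #|C|}.
  move=> v vB; rewrite /f !card_setD1 vB (disjointFl dAB vB) (disjointFr dBC vB).
  by rewrite subn1 !subn0.
have fC : {in C, forall v, f v = F #|A| #|B| #|C|.-1}.
  move=> v vC; rewrite /f !card_setD1 vC (disjointFl dAC vC) (disjointFl dBC vC).
  by rewrite subn1 !subn0.
have fR : {in R :\: (A :|: B :|: C), forall v, f v = F #|A| #|B| #|C|}.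
  move=> v; rewrite !inE !negb_or => /andP[/andP[/andP[vA vB] vC] _].
  by rewrite /f !card_setD1 (negbTE vA) (negbTE vB) (negbTE vC) !subn0.
rewrite (sum_const _ _ fA) (sum_const _ _ fB) (sum_const _ _ fC) (sum_const _ _ fR).
lia.
Qed.

Lemma cardsD_disjointU3 R A B C :
  [disjoint A & B] -> [disjoint A & C] -> [disjoint B & C] ->
  A :|: B :|: C \subset R ->
  #|R :\: (A :|: B :|: C)| + #|A| + #|B| + #|C| = #|R|.
Proof.
move=> dAB dAC dBC sUR.
have cardU (D E : {set T}) : [disjoint D & E] -> #|D :|: E| = #|D| + #|E|.
  by move=> dDE; rewrite -cardsUI (disjoint_setI0 dDE) cards0 addn0.
have dUC : [disjoint A :|: B & C] by rewrite -setI_eq0 setIUl !disjoint_setI0 ?setU0.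
have := subset_leq_card sUR.
rewrite (cardsDS sUR) (cardU _ _ dUC) (cardU _ _ dAB); lia.
Qed.

End DeletedCards.

Definition eq_triple (k1 k2 k3 a b c : nat) : bool := [&& a == k1, b == k2 & c == k3].

Lemma eq_triple_deletion_identity (n r a b c k1 k2 k3 : nat) :
  r + a + b + c + 2 = n ->
  r * eq_triple k1 k2 k3 a b c + a * eq_triple k1 k2 k3 a.-1 b c
  + b * eq_triple k1 k2 k3 a b.-1 c + c * eq_triple k1 k2 k3 a b c.-1
  + (k1 + k2 + k3 + 2) * eq_triple k1 k2 k3 a b c
  = n * eq_triple k1 k2 k3 a b c + k1.+1 * eq_triple k1.+1 k2 k3 a b c
  + k2.+1 * eq_triple k1 k2.+1 k3 a b c + k3.+1 * eq_triple k1 k2 k3.+1 a b c.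
Proof.
have shift m k (q : bool) : m * ((m.-1 == k) && q) = k.+1 * ((m == k.+1) && q).
  case: m => [|m]; first by rewrite mul0n muln0.
  by rewrite /= eqSS; case: eqP => [->|]; rewrite ?muln0.
have shift1 : a * eq_triple k1 k2 k3 a.-1 b c = k1.+1 * eq_triple k1.+1 k2 k3 a b c.
  exact: shift.
have shift2 : b * eq_triple k1 k2 k3 a b.-1 c = k2.+1 * eq_triple k1 k2.+1 k3 a b c.
  by rewrite /eq_triple andbCA shift andbCA.
have shift3 : c * eq_triple k1 k2 k3 a b c.-1 = k3.+1 * eq_triple k1 k2 k3.+1 a b c.
  by rewrite /eq_triple andbA andbC shift andbC andbA.
have weight : (a + b + c) * eq_triple k1 k2 k3 a b c
              = (k1 + k2 + k3) * eq_triple k1 k2 k3 a b c.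
  by rewrite /eq_triple; case: and3P => [[/eqP-> /eqP-> /eqP->]|]; rewrite ?muln0.
move=> <-; rewrite shift1 shift2 shift3; rewrite !mulnDl in weight *; lia.
Qed.

Section VertexDeletion.
Variables (T : finType) (e : rel T).
Hypothesis e_irr : irreflexive e.
Implicit Types (S : {set T}) (x y v : T).

Definition common_nbrs S x y : {set T} := [set z in S | e x z && e y z].

Definition private_nbrs S x y : {set T} :=
  [set z in S | [&& e x z, ~~ e y z & z != y]].

Definition dav_pair S (k1 k2 k3 : nat) (p : T * T) : bool :=
  [&& p.1 \in S, p.2 \in S, e p.1 p.2, #|common_nbrs S p.1 p.2| == k1,
      #|private_nbrs S p.1 p.2| == k2 & #|private_nbrs S p.2 p.1| == k3].

Lemma dav_onE S (k1 k2 k3 : nat) : dav_on e S k1 k2 k3 = \sum_p dav_pair S k1 k2 k3 p.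
Proof.
rewrite /dav_on -sum1dep_card big_mkcond; apply: eq_bigr => p _.
by rewrite -[X in if X then _ else _]/(dav_pair S k1 k2 k3 p); case: dav_pair.
Qed.

Lemma dav_pair_setT (k1 k2 k3 : nat) x y : e x y ->
  dav_pair setT k1 k2 k3 (x, y) =
  eq_triple k1 k2 k3 #|common_nbrs setT x y| #|private_nbrs setT x y|
                     #|private_nbrs setT y x|.
Proof. by move=> exy; rewrite /dav_pair !inE exy. Qed.

Lemma dav_pair_setD1 (k1 k2 k3 : nat) x y v : e x y ->
  dav_pair (setT :\ v) k1 k2 k3 (x, y) =
  (v \in ~: [set x; y]) && eq_triple k1 k2 k3 #|common_nbrs setT x y :\ v|
                            #|private_nbrs setT x y :\ v| #|private_nbrs setT y x :\ v|.
Proof.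
move=> exy; rewrite /dav_pair /common_nbrs /private_nbrs !setIdD1 !inE exy negb_or /=.
by rewrite !andbT (eq_sym x) (eq_sym y) andbA.
Qed.

Lemma adj_neq [x y] : e x y -> y != x.
Proof. by apply: contraTneq => ->; rewrite e_irr. Qed.

Lemma common_nbrsC S x y : common_nbrs S x y = common_nbrs S y x.
Proof. by apply/setP => z; rewrite !inE [e x z && _]andbC. Qed.

Lemma disjoint_common_private S x y :
  [disjoint common_nbrs S x y & private_nbrs S x y].
Proof.
by rewrite -setI_eq0; apply/eqP/setP => z; rewrite !inE; case: (e y z); rewrite !andbF.
Qed.

Lemma disjoint_private S x y : [disjoint private_nbrs S x y & private_nbrs S y x].
Proof.
by rewrite -setI_eq0; apply/eqP/setP => z; rewrite !inE; case: (e x z); rewrite !andbF.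
Qed.

Lemma common_nbrs_sub S x y : common_nbrs S x y \subset ~: [set x; y].
Proof.
by apply/subsetP => z; rewrite !inE negb_or => /and3P[_ /adj_neq-> /adj_neq->].
Qed.

Lemma private_nbrs_sub S x y : private_nbrs S x y \subset ~: [set x; y].
Proof.
by apply/subsetP => z; rewrite !inE negb_or => /and4P[_ /adj_neq-> _ ->].
Qed.

Lemma dav_pair_deletion_count (k1 k2 k3 : nat) (p : T * T) :
  \sum_v dav_pair (setT :\ v) k1 k2 k3 p
    + (k1 + k2 + k3 + 2) * dav_pair setT k1 k2 k3 p
  = #|T| * dav_pair setT k1 k2 k3 p + k1.+1 * dav_pair setT k1.+1 k2 k3 p
    + k2.+1 * dav_pair setT k1 k2.+1 k3 p + k3.+1 * dav_pair setT k1 k2 k3.+1 p.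
Proof.
case: p => x y; have [exy | nexy] := boolP (e x y); last first.
  by rewrite big1 => [|v _]; rewrite /dav_pair /= (negbTE nexy) ?andbF ?muln0.
set N := common_nbrs setT x y; set X := private_nbrs setT x y.
set Y := private_nbrs setT y x.
have -> : \sum_v dav_pair (setT :\ v) k1 k2 k3 (x, y) =
    \sum_(v in ~: [set x; y]) eq_triple k1 k2 k3 #|N :\ v| #|X :\ v| #|Y :\ v|.
  by rewrite [RHS]big_mkcond; apply: eq_bigr => v _; rewrite dav_pair_setD1 //; case: ifP.
have dNX : [disjoint N & X] := disjoint_common_private _ _ _.
have dNY : [disjoint N & Y] by rewrite /N common_nbrsC; apply: disjoint_common_private.
have dXY : [disjoint X & Y] := disjoint_private _ _ _.
have sUR : N :|: X :|: Y \subset ~: [set x; y].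
  by rewrite !subUset common_nbrs_sub private_nbrs_sub /Y setUC private_nbrs_sub.
rewrite !dav_pair_setT // (@sum_cardsD1 _ _ _ _ _ (eq_triple k1 k2 k3)) //.
apply: eq_triple_deletion_identity.
by rewrite cardsD_disjointU3 // -(cardsC [set x; y]) cards2 eq_sym (adj_neq exy) addnC.
Qed.

Lemma sum_dav_del (k1 k2 k3 : nat) :
  \sum_v dav_del e v k1 k2 k3 + (k1 + k2 + k3 + 2) * dav e k1 k2 k3
  = #|T| * dav e k1 k2 k3 + k1.+1 * dav e k1.+1 k2 k3
    + k2.+1 * dav e k1 k2.+1 k3 + k3.+1 * dav e k1 k2 k3.+1.
Proof.
rewrite /dav_del /dav; under eq_bigr do rewrite dav_onE.
rewrite !dav_onE exchange_big !big_distrr -!big_split /=.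
by apply: eq_bigr => p _; apply: dav_pair_deletion_count.
Qed.

End VertexDeletion.

Local Open Scope ring_scope.

Theorem theorem16 (T : finType) (e : rel T)
  (e_sym : symmetric e) (e_irr : irreflexive e)
  (e_conn : connected_graph e)
  (k1 k2 k3 : nat) (hk : k2 <> k3) :
  ((\sum_(v : T) dav_del e v k1 k2 k3)%N)%:Z =
    (#|T|%:Z - 2 - k1%:Z - k2%:Z - k3%:Z) * (dav e k1 k2 k3)%:Z
    + (k1.+1)%:Z * (dav e k1.+1 k2 k3)%:Z
    + (k2.+1)%:Z * (dav e k1 k2.+1 k3)%:Z
    + (k3.+1)%:Z * (dav e k1 k2 k3.+1)%:Z.
Proof.
by have := sum_dav_del e_irr k1 k2 k3; lia.
Qed.
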